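(* Let $j_1,j_2,j_3$ be distinct complex numbers and use cyclic triples $(\alpha,\beta,\gamma)$ of $(1,2,3)$. Let $\mathcal E\subset\mathbb C^3(v_1,v_2,v_3)$ be the elliptic curve \[ v_1^2-v_2^2=j_1-j_2,\qquad v_1^2-v_3^2=j_1-j_3, \] and fix constants $c_\alpha$ with $c_\alpha^2=\dfrac{1}{(j_\alpha-j_\beta)(j_\alpha-j_\gamma)}$. Let $M=\mathbb C^6$ with coordinates $(S_1,S_2,S_3,T_1,T_2,T_3)$, and let \[ \hat{\mathcal S}=\Big\{(S,T,v)\in M\times\mathcal E:\ \sum_{\alpha=1}^3 c_\alpha\big(v_\beta v_\gamma T_\alpha+v_\alpha S_\alpha\big)=0\Big\}. \] Then $\hat{\mathcal S}$ is an $8$-fold covering of $M$ under the canonical projection $\pi:\hat{\mathcal S}\to M$, $(S,T,v)\mapsto(S,T)$; that is, to a (generic) point of $M$ there correspond eight points of $\hat{\mathcal S}$. *)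

From HB Require Import structures.
From mathcomp Require Import all_boot all_order all_algebra.
From mathcomp Require Export mpoly.
Set Implicit Arguments. Unset Strict Implicit. Unset Printing Implicit Defensive.
Import Order.TTheory GRing.Theory Num.Theory.
Local Open Scope ring_scope.

Definition on_curve (C : numClosedFieldType) (j1 j2 j3 : C) (v : C * C * C) : Prop :=
  let: (v1, v2, v3) := v in
  v1 ^+ 2 - v2 ^+ 2 = j1 - j2 /\ v1 ^+ 2 - v3 ^+ 2 = j1 - j3.

Definition hatS_eq (C : numClosedFieldType) (c1 c2 c3 : C) (x : 'I_6 -> C)
    (v : C * C * C) : Prop :=
  let: (v1, v2, v3) := v in
  let S1 := x (inord 0) in let S2 := x (inord 1) in let S3 := x (inord 2) in
  let T1 := x (inord 3) in let T2 := x (inord 4) in let T3 := x (inord 5) in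
  c1 * (v2 * v3 * T1 + v1 * S1) + c2 * (v3 * v1 * T2 + v2 * S2)
    + c3 * (v1 * v2 * T3 + v3 * S3) = 0.

Definition fibre (C : numClosedFieldType) (j1 j2 j3 c1 c2 c3 : C) (x : 'I_6 -> C)
    (v : C * C * C) : Prop :=
  on_curve j1 j2 j3 v /\ hatS_eq c1 c2 c3 x v.

Definition fibre_card (C : numClosedFieldType) (j1 j2 j3 c1 c2 c3 : C)
    (x : 'I_6 -> C) (n : nat) : Prop :=
  exists s : seq (C * C * C),
    [/\ uniq s, size s = n & forall v, fibre j1 j2 j3 c1 c2 c3 x v <-> v \in s].

From HB Require Import structures.
From mathcomp Require Import all_boot all_order all_algebra.
From mathcomp Require Import separable mpoly.
From mathcomp.algebra_tactics Require Import ring.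
Set Implicit Arguments. Unset Strict Implicit. Unset Printing Implicit Defensive.
Import Order.TTheory GRing.Theory Num.Theory.
Local Open Scope ring_scope.

(* On the curve, z = v1 + v2 is a coordinate: with a = j1 - j2 and b = j1 - j3,
   v1 = (z^2 + a)/2z and v2 = (z^2 - a)/2z with z <> 0.  Writing s_i = c_i S_i
   and t_i = c_i T_i, the equation of \hat S times 4z^2 reads
   2 z A(z) v3 + B(z) = 0 with A quadratic and B quartic in z, and then the
   equation v1^2 - v3^2 = b becomes F(z) = A^2 R - B^2 = 0, where
   R(z) = (z^2 + a)^2 - 4 b z^2.  If F has degree 8, F(0) <> 0 and F is
   separable (so that A cannot vanish at a root of F), the fibre is in
   bijection with the eight roots of F.  These conditions amount to
   lc(F) F(0) Res(F, F') <> 0, a polynomial condition P on (S, T).  P is not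
   the zero polynomial: at S1 = f/c1, T1 = 1/c1 and all other coordinates 0,
   the substitution w = z^2 + a^2/z^2 gives F(z) = z^4 H(w) with H quadratic,
   and a common root of F and F' would force H to have a double root or
   z^4 = a^2, both excluded for a suitable f. *)

(* mxpoly's [map_resultant] is stated only for morphisms out of [{poly aR}]. *)
Lemma rmorph_resultant (aR rR : nzRingType) (f : {rmorphism aR -> rR})
    (p q : {poly aR}) :
    f (lead_coef p) != 0 -> f (lead_coef q) != 0 ->
  f (resultant p q) = resultant (map_poly f p) (map_poly f q).
Proof.
move=> nz_fp nz_fq; rewrite /resultant /Sylvester_mx !size_map_poly_id0 //.
rewrite -det_map_mx /= map_col_mx; congr (\det (col_mx _ _));
  by apply: map_lin1_mx => v; rewrite map_poly_rV rmorphM /= map_rVpoly.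
Qed.

Lemma size_eq_coef (R : nzSemiRingType) (p : {poly R}) n :
  (size p <= n.+1)%N -> p`_n != 0 -> size p = n.+1.
Proof.
move=> le_p_n nz_pn; apply/eqP; rewrite eqn_leq le_p_n ltnNge /=.
by apply: contra nz_pn => /leq_sizeP->.
Qed.

Definition sep_test (R : nzRingType) n (p : {poly R}) : R :=
  p`_n * p`_0 * resultant p p^`().

Lemma sep_testE (R : idomainType) n (p : {poly R}) :
  (sep_test n p != 0) = [&& p`_n != 0, p`_0 != 0 & separable_poly p].
Proof.
rewrite /sep_test !mulf_eq0 !negb_or -andbA; apply: andb_id2l => nz_pn.
congr (_ && _); have nz_p : p != 0 by apply: contraNneq nz_pn => ->; rewrite coef0.
rewrite separable_poly.unlock coprimep_def resultant_eq0 -leqNgt /=.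
by rewrite eqn_leq lt0n size_poly_eq0 gcdp_eq0 negb_and nz_p andbT.
Qed.

Lemma rmorph_sep_test (aR : comNzRingType) (rR : numDomainType)
    (f : {rmorphism aR -> rR}) n (p : {poly aR}) :
  (size p <= n.+2)%N -> f (sep_test n.+1 p) = sep_test n.+1 (map_poly f p).
Proof.
move=> le_p; rewrite /sep_test !rmorphM -!coef_map.
have [-> | nz_fpn] := eqVneq (map_poly f p)`_n.+1 0; first by rewrite !mul0r.
have nz_pn : p`_n.+1 != 0.
  by apply: contraNneq nz_fpn; rewrite coef_map => ->; rewrite raddf0.
have size_p : size p = n.+2 := size_eq_coef le_p nz_pn.
have size_dp : (size p^`() <= n.+1)%N.
  by rewrite -ltnS -size_p lt_size_deriv // -size_poly_gt0 size_p.
have nz_fdpn : f p^`()`_n != 0.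
  by rewrite coef_deriv rmorphMn mulrn_eq0 -coef_map.
have nz_dpn : p^`()`_n != 0.
  by apply: contraNneq nz_fdpn => ->; rewrite raddf0.
congr (_ * _); rewrite deriv_map rmorph_resultant //.
  by rewrite lead_coefE size_p -coef_map.
by rewrite lead_coefE (size_eq_coef size_dp nz_dpn).
Qed.

Lemma closed_coprimepP (C : closedFieldType) (p q : {poly C}) :
  reflect (forall z, root p z -> ~~ root q z) (coprimep p q).
Proof.
apply: (iffP idP) => [co_pq z | no_common]; first exact: coprimep_root.
rewrite coprimep_def; apply: contraT => /closed_rootP[z].
by rewrite root_gcd => /andP[/no_common/negP].
Qed.

Lemma separable_roots (C : closedFieldType) (p : {poly C}) : separable_poly p ->
  exists rs : seq C,
    [/\ uniq rs, size rs = (size p).-1 & forall z, root p z = (z \in rs)].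
Proof.
move=> sep_p; have [rs Dp] := closed_field_poly_normal p.
have nz_lp : lead_coef p != 0 by rewrite lead_coef_eq0 separable_poly_neq0.
exists rs; split.
- by rewrite -separable_prod_XsubC -(eqp_separable (eqp_scale _ nz_lp)) -Dp.
- by rewrite Dp size_scale // size_prod_XsubC.
- by move=> z; rewrite Dp rootZ // root_prod_XsubC.
Qed.

Section Eliminant.
Variables (K : comNzRingType) (A2 A1 A0 B4 B3 B1 B0 R4 R2 R0 : K).

Definition elimA z := A2 * z ^+ 2 + A1 * z + A0.
Definition elimB z := B4 * z ^+ 4 + B3 * z ^+ 3 + B1 * z + B0.
Definition elimR z := R4 * z ^+ 4 + R2 * z ^+ 2 + R0.

Definition elim_coef i :=
  let P4 := A2 ^+ 2 in let P3 := (A2 * A1) *+ 2 in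
  let P2 := A1 ^+ 2 + (A2 * A0) *+ 2 in let P1 := (A1 * A0) *+ 2 in
  let P0 := A0 ^+ 2 in
  match i with
  | 8 => P4 * R4 - B4 ^+ 2
  | 7 => P3 * R4 - (B4 * B3) *+ 2
  | 6 => P2 * R4 + P4 * R2 - B3 ^+ 2
  | 5 => P1 * R4 + P3 * R2 - (B4 * B1) *+ 2
  | 4 => P0 * R4 + P2 * R2 + P4 * R0 - ((B4 * B0) *+ 2 + (B3 * B1) *+ 2)
  | 3 => P1 * R2 + P3 * R0 - (B3 * B0) *+ 2
  | 2 => P0 * R2 + P2 * R0 - B1 ^+ 2
  | 1 => P1 * R0 - (B1 * B0) *+ 2
  | 0 => P0 * R0 - B0 ^+ 2
  | _ => 0
  end.

Definition elim_poly : {poly K} := \poly_(i < 9) elim_coef i.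

Lemma horner_elim_poly z : elim_poly.[z] = elimA z ^+ 2 * elimR z - elimB z ^+ 2.
Proof. by rewrite horner_poly !big_ord_recr big_ord0 /= /elimA /elimB /elimR; ring. Qed.

Lemma horner_deriv_elim_poly z : elim_poly^`().[z] =
  (elimA z * (A2 * z *+ 2 + A1) * elimR z) *+ 2
  + elimA z ^+ 2 * (R4 * z ^+ 3 *+ 4 + R2 * z *+ 2)
  - (elimB z * (B4 * z ^+ 3 *+ 4 + B3 * z ^+ 2 *+ 3 + B1)) *+ 2.
Proof.
have -> : elim_poly^`() = \poly_(i < 8) (elim_coef i.+1 *+ i.+1).
  apply/polyP => i; rewrite coef_deriv !coef_poly.
  by case: i => [|[|[|[|[|[|[|[|i]]]]]]]] //=; rewrite mul0rn.
by rewrite horner_poly !big_ord_recr big_ord0 /= /elimA /elimB /elimR; ring.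
Qed.

End Eliminant.

Lemma map_elim_poly (K K' : comNzRingType) (f : {rmorphism K -> K'})
    (A2 A1 A0 B4 B3 B1 B0 R4 R2 R0 : K) :
  map_poly f (elim_poly A2 A1 A0 B4 B3 B1 B0 R4 R2 R0) =
  elim_poly (f A2) (f A1) (f A0) (f B4) (f B3) (f B1) (f B0) (f R4) (f R2) (f R0).
Proof.
apply/polyP => i; rewrite coef_map !coef_poly; case: ifP => _; last exact: raddf0.
by case: i => [|[|[|[|[|[|[|[|[|i]]]]]]]]];
  rewrite /elim_coef /= ?raddf0 // !(rmorphB, rmorphD, rmorphM, rmorphXn, rmorphMn).
Qed.

(* The arguments are a, b, s_1, s_2, s_3, t_1, t_2, t_3; the three rows below
   are the coefficients of A, B and R. *)
Definition fibre_poly (K : comNzRingType) (a b s1 s2 s3 t1 t2 t3 : K) : {poly K} :=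
  elim_poly (t1 + t2) (s3 *+ 2) (a * (t2 - t1))
            t3 ((s1 + s2) *+ 2) ((a * (s1 - s2)) *+ 2) (- (a ^+ 2 * t3))
            1 ((a - b *+ 2) *+ 2) (a ^+ 2).

Lemma map_fibre_poly (K K' : comNzRingType) (f : {rmorphism K -> K'})
    (a b s1 s2 s3 t1 t2 t3 : K) :
  map_poly f (fibre_poly a b s1 s2 s3 t1 t2 t3) =
  fibre_poly (f a) (f b) (f s1) (f s2) (f s3) (f t1) (f t2) (f t3).
Proof.
by rewrite map_elim_poly !(rmorphB, rmorphD, rmorphM, rmorphXn, rmorphMn, rmorphN, rmorph1).
Qed.

Section Fibre.
Variables (C : numClosedFieldType) (j1 j2 j3 c1 c2 c3 : C) (x : 'I_6 -> C).
Local Notation a := (j1 - j2).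
Local Notation b := (j1 - j3).
Local Notation s1 := (c1 * x (inord 0)).
Local Notation s2 := (c2 * x (inord 1)).
Local Notation s3 := (c3 * x (inord 2)).
Local Notation t1 := (c1 * x (inord 3)).
Local Notation t2 := (c2 * x (inord 4)).
Local Notation t3 := (c3 * x (inord 5)).
Local Notation F := (fibre_poly a b s1 s2 s3 t1 t2 t3).

Definition fibre_A z := elimA (t1 + t2) (s3 *+ 2) (a * (t2 - t1)) z.
Definition fibre_B z :=
  elimB t3 ((s1 + s2) *+ 2) ((a * (s1 - s2)) *+ 2) (- (a ^+ 2 * t3)) z.

Definition fibre_point z : C * C * C :=
  ((z ^+ 2 + a) / (z *+ 2), (z ^+ 2 - a) / (z *+ 2),
   - fibre_B z / (fibre_A z * z *+ 2)).

Lemma horner_fibre_poly z :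
  F.[z] = fibre_A z ^+ 2 * ((z ^+ 2 + a) ^+ 2 - b * z ^+ 2 *+ 4) - fibre_B z ^+ 2.
Proof. by rewrite horner_elim_poly /elimR; congr (_ * _ - _); ring. Qed.

Lemma root_deriv_fibre_poly z : root F z -> fibre_A z = 0 -> root F^`() z.
Proof.
rewrite /root => + A0; rewrite horner_fibre_poly A0 expr0n mul0r sub0r oppr_eq0.
rewrite expf_eq0 /= => /eqP B0; rewrite /fibre_A /fibre_B in A0 B0.
by rewrite horner_deriv_elim_poly A0 B0 !(mul0r, mulr0, mul0rn, expr0n) addr0 subr0.
Qed.

Lemma curve_param v1 v2 : a != 0 -> v1 ^+ 2 - v2 ^+ 2 = a ->
  [/\ v1 + v2 != 0, v1 = ((v1 + v2) ^+ 2 + a) / ((v1 + v2) *+ 2)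
                  & v2 = ((v1 + v2) ^+ 2 - a) / ((v1 + v2) *+ 2)].
Proof.
move=> nz_a e12; have nz_z : v1 + v2 != 0.
  by apply: contraNneq nz_a => z0; rewrite -e12 subr_sqr z0 mulr0.
have nz_2z : (v1 + v2) *+ 2 != 0 by rewrite mulrn_eq0.
by split=> //; apply: (mulIf nz_2z); rewrite divfK // -e12; ring.
Qed.

Lemma hatS_eq_param z v3 : z != 0 ->
  hatS_eq c1 c2 c3 x ((z ^+ 2 + a) / (z *+ 2), (z ^+ 2 - a) / (z *+ 2), v3) <->
  fibre_A z * z * v3 *+ 2 + fibre_B z = 0.
Proof.
move=> nz_z; have nz_4zz : z ^+ 2 *+ 4 != 0 by rewrite mulrn_eq0 expf_eq0.
rewrite /hatS_eq /=; set L := (X in X = 0).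
have -> : L = (fibre_A z * z * v3 *+ 2 + fibre_B z) / (z ^+ 2 *+ 4).
  by rewrite /L /fibre_A /fibre_B /elimA /elimB; field; rewrite ?pnatr_eq0.
split=> [/eqP | ->]; last by rewrite mul0r.
by rewrite mulf_eq0 invr_eq0 (negbTE nz_4zz) orbF => /eqP.
Qed.

Lemma fibre_root v1 v2 v3 : a != 0 -> fibre j1 j2 j3 c1 c2 c3 x (v1, v2, v3) ->
  [/\ v1 + v2 != 0, root F (v1 + v2)
    & fibre_A (v1 + v2) != 0 -> fibre_point (v1 + v2) = (v1, v2, v3)].
Proof.
move=> nz_a [[e12 e13] hS]; have [nz_z Dv1 Dv2] := curve_param nz_a e12.
set z := v1 + v2 in nz_z Dv1 Dv2 *.
rewrite {1}Dv1 {1}Dv2 in hS; have /(hatS_eq_param _ nz_z) lin := hS.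
have EB : fibre_B z = - (fibre_A z * z * v3 *+ 2).
  by apply/eqP; rewrite -addr_eq0 addrC lin.
have ER : (z ^+ 2 + a) ^+ 2 - b * z ^+ 2 *+ 4 = (z * v3 *+ 2) ^+ 2.
  by rewrite -e13 Dv1; field; rewrite ?nz_z ?pnatr_eq0.
split=> // [|nz_A]; first by apply/eqP; rewrite horner_fibre_poly ER EB; ring.
rewrite /fibre_point -Dv1 -Dv2 EB; congr (_, _, _).
by field; rewrite ?nz_z ?nz_A ?pnatr_eq0.
Qed.

Lemma fibre_point_fibre z : z != 0 -> fibre_A z != 0 -> root F z ->
  fibre j1 j2 j3 c1 c2 c3 x (fibre_point z).
Proof.
move=> nz_z nz_A /eqP; rewrite horner_fibre_poly => /eqP; rewrite subr_eq0 => /eqP EB2.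
split; first split.
- by field; rewrite ?nz_z ?pnatr_eq0.
- by rewrite !expr_div_n sqrrN -EB2; field; rewrite ?nz_z ?nz_A ?pnatr_eq0.
- by apply/hatS_eq_param => //; field; rewrite ?nz_z ?nz_A ?pnatr_eq0.
Qed.

Lemma fibre_point_sum z : z != 0 -> (fibre_point z).1.1 + (fibre_point z).1.2 = z.
Proof. by move=> nz_z /=; field; rewrite ?nz_z ?pnatr_eq0. Qed.

End Fibre.

Lemma fibre_card_sep_test (C : numClosedFieldType) (j1 j2 j3 c1 c2 c3 : C)
    (x : 'I_6 -> C) :
  j1 != j2 ->
  sep_test 8 (fibre_poly (j1 - j2) (j1 - j3)
    (c1 * x (inord 0)) (c2 * x (inord 1)) (c3 * x (inord 2))
    (c1 * x (inord 3)) (c2 * x (inord 4)) (c3 * x (inord 5))) != 0 ->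
  fibre_card j1 j2 j3 c1 c2 c3 x 8.
Proof.
rewrite -subr_eq0 => nz_a; set F := fibre_poly _ _ _ _ _ _ _ _.
rewrite sep_testE => /and3P[nz_F8 nz_F0 sep_F].
have [rs [uniq_rs size_rs rootF]] := separable_roots sep_F.
have size_F : size F = 9 := size_eq_coef (size_poly _ _) nz_F8.
have root_neq0 z : root F z -> z != 0.
  by apply: contraTneq => ->; rewrite /root horner_coef0.
have root_A z : root F z -> fibre_A j1 j2 c1 c2 c3 x z != 0.
  move=> Fz; rewrite separable_poly.unlock in sep_F.
  apply: contraTneq (coprimep_root sep_F Fz) => A0.
  by rewrite negbK; apply: root_deriv_fibre_poly Fz A0.
exists (map (fibre_point j1 j2 c1 c2 c3 x) rs); split.
- rewrite map_inj_in_uniq // => z1 z2; rewrite -!rootF => F1 F2.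
  by move/(congr1 (fun v => v.1.1 + v.1.2)); rewrite !fibre_point_sum ?root_neq0.
- by rewrite size_map size_rs size_F.
move=> [[v1 v2] v3]; split=> [fib | /mapP[z]].
  have [nz_z Fz Dv] := fibre_root nz_a fib.
  by apply/mapP; exists (v1 + v2); rewrite -?rootF // Dv // root_A.
by rewrite -rootF => Fz ->; exact: fibre_point_fibre (root_neq0 _ Fz) (root_A _ Fz) Fz.
Qed.

Lemma exists_witness_param (C : numFieldType) (a b : C) :
  exists2 f : C, f != 0 & (f ^+ 2 + a + b) ^+ 2 != a * b *+ 4.
Proof.
pose D (f : C) := (f ^+ 2 + a + b) ^+ 2 - a * b *+ 4.
have witness_nat n : D n.+1%:R != 0 ->
    exists2 f : C, f != 0 & (f ^+ 2 + a + b) ^+ 2 != a * b *+ 4.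
  by move=> nzD; exists n.+1%:R; rewrite ?pnatr_eq0 // -subr_eq0.
(* [D] is a monic quadratic in [f ^+ 2]; the weights 5, -8, 3 annihilate
   polynomials of degree < 2 sampled at [f ^+ 2 = 1, 4, 9]. *)
have D_comb : D 1%:R *+ 5 - D 2%:R *+ 8 + D 3%:R *+ 3 = 120 by rewrite /D; ring.
have [D1|] := eqVneq (D 1%:R) 0; last exact: witness_nat.
have [D2|] := eqVneq (D 2%:R) 0; last exact: witness_nat.
have [D3|] := eqVneq (D 3%:R) 0; last exact: witness_nat.
by move: D_comb; rewrite D1 D2 D3 !mul0rn subrr add0r => /eqP; rewrite eq_sym pnatr_eq0.
Qed.

Section Witness.
Variables (C : numClosedFieldType) (a b f : C).
Hypotheses (nz_a : a != 0) (nz_b : b != 0) (nz_f : f != 0).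
Hypothesis Df : (f ^+ 2 + a + b) ^+ 2 != a * b *+ 4.
Local Notation Fw := (fibre_poly a b f 0 0 1 0 0).

Let H w := (w - a *+ 2) * (w + a *+ 2 - b *+ 4) - (f ^+ 2 * (w + a *+ 2)) *+ 4.
Let dH w := w *+ 2 - (b + f ^+ 2) *+ 4.

Lemma witness_coef8 : Fw`_8 = 1.
Proof. by rewrite coef_poly /=; ring. Qed.

Lemma witness_coef0 : Fw`_0 = a ^+ 4.
Proof. by rewrite coef_poly /=; ring. Qed.

Lemma witness_horner z : z != 0 ->
  Fw.[z] = z ^+ 4 * H (z ^+ 2 + a ^+ 2 / z ^+ 2).
Proof.
move=> nz_z; rewrite horner_elim_poly /elimA /elimB /elimR /H.
by field; rewrite ?nz_z.
Qed.

Lemma witness_horner_deriv z : z != 0 ->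
  Fw^`().[z] = z *+ 2 * (z ^+ 2 *+ 2 * H (z ^+ 2 + a ^+ 2 / z ^+ 2)
                         + (z ^+ 4 - a ^+ 2) * dH (z ^+ 2 + a ^+ 2 / z ^+ 2)).
Proof.
move=> nz_z; rewrite horner_deriv_elim_poly /elimA /elimB /elimR /H /dH.
by field; rewrite ?nz_z.
Qed.

Lemma witness_separable : separable_poly Fw.
Proof.
rewrite separable_poly.unlock; apply/closed_coprimepP => z Fz.
have nz_z : z != 0.
  by apply: contraTneq Fz => ->; rewrite /root horner_coef0 witness_coef0 expf_neq0.
set w := z ^+ 2 + a ^+ 2 / z ^+ 2.
have Hw : H w = 0.
  move/eqP: Fz; rewrite witness_horner // => /eqP.
  by rewrite mulf_eq0 expf_eq0 (negbTE nz_z) /= => /eqP.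
rewrite /root witness_horner_deriv // -/w Hw mulr0 add0r.
apply: mulf_neq0; first by rewrite mulrn_eq0.
apply: mulf_neq0.
  rewrite (_ : z ^+ 4 - a ^+ 2 = (z ^+ 2 - a) * (z ^+ 2 + a)); last by ring.
  rewrite mulf_eq0 negb_or subr_eq0 addr_eq0; apply/andP; split; apply/eqP => zz.
    suff : H w != 0 by rewrite Hw eqxx.
    rewrite (_ : w = a *+ 2); last by rewrite /w zz; field.
    rewrite (_ : H _ = - (a * f ^+ 2) *+ 16); last by rewrite /H; ring.
    by rewrite mulrn_eq0 oppr_eq0 mulf_eq0 expf_eq0 (negbTE nz_a) (negbTE nz_f) andbF.
  suff : H w != 0 by rewrite Hw eqxx.
  rewrite (_ : w = - a *+ 2); last by rewrite /w zz; field.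
  rewrite (_ : H _ = (a * b) *+ 16); last by rewrite /H; ring.
  by rewrite mulrn_eq0 mulf_eq0 (negbTE nz_a) (negbTE nz_b).
apply: contraNneq Df => dHw.
have key : ((f ^+ 2 + a + b) ^+ 2 - a * b *+ 4) *+ 16 = dH w ^+ 2 - H w *+ 4.
  by rewrite /H /dH; ring.
move: key; rewrite Hw dHw expr0n /= mul0rn subrr => /eqP.
by rewrite mulrn_eq0 /= subr_eq0.
Qed.

Lemma witness_sep_test : sep_test 8 Fw != 0.
Proof.
by rewrite sep_testE witness_coef8 witness_coef0 oner_eq0 expf_neq0 ?witness_separable.
Qed.

End Witness.

Theorem corollary5 (C : numClosedFieldType) (j1 j2 j3 c1 c2 c3 : C)
  (h12 : j1 != j2) (h13 : j1 != j3) (h23 : j2 != j3)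
  (hc1 : c1 ^+ 2 = ((j1 - j2) * (j1 - j3))^-1)
  (hc2 : c2 ^+ 2 = ((j2 - j3) * (j2 - j1))^-1)
  (hc3 : c3 ^+ 2 = ((j3 - j1) * (j3 - j2))^-1) :
  exists P : {mpoly C[6]}, P != 0 /\
    forall x : 'I_6 -> C, P.@[x] != 0 -> fibre_card j1 j2 j3 c1 c2 c3 x 8.
Proof.
have nz_a : j1 - j2 != 0 by rewrite subr_eq0.
have nz_b : j1 - j3 != 0 by rewrite subr_eq0.
have nz_c1 : c1 != 0.
  apply/eqP => c1_0; move: hc1; rewrite c1_0 expr0n /= => /esym/eqP.
  by rewrite invr_eq0 mulf_eq0 (negbTE nz_a) (negbTE nz_b).
pose X i : {mpoly C[6]} := 'X_(inord i).
pose FM := fibre_poly (j1 - j2)%:MP (j1 - j3)%:MP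
  (c1%:MP * X 0) (c2%:MP * X 1) (c3%:MP * X 2) (c1%:MP * X 3) (c2%:MP * X 4) (c3%:MP * X 5).
have evalFM x : (sep_test 8 FM).@[x] = sep_test 8 (fibre_poly (j1 - j2) (j1 - j3)
    (c1 * x (inord 0)) (c2 * x (inord 1)) (c3 * x (inord 2))
    (c1 * x (inord 3)) (c2 * x (inord 4)) (c3 * x (inord 5))).
  by rewrite rmorph_sep_test ?size_poly // map_fibre_poly /= !rmorphM /= !mevalC !mevalXU.
exists (sep_test 8 FM); split=> [|x]; last by rewrite evalFM; apply: fibre_card_sep_test.
have [f nz_f Df] := exists_witness_param (j1 - j2) (j1 - j3).
pose x0 (i : 'I_6) := [:: f / c1; 0; 0; c1^-1; 0; 0]`_i.
apply: contraNneq (witness_sep_test nz_a nz_b nz_f Df) => FM0.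
move: (evalFM x0); rewrite FM0 meval0 /x0 !inordK //= !mulr0 divff // mulrCA divff //.
by rewrite mulr1 => <-.
Qed.
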